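(* Let $n\in\mathbb{N}$ and let $(\Pi_1,\Pi_2,\dots,\Pi_n)$ be a uniformly random permutation of $(1,2,\dots,n)$. Then for all $r\ge1$, $$\Pr\Big[\big|\{i\in\{1,\dots,\lfloor n/2\rfloor\}:|\Pi_{2i-1}-\Pi_{2i}|\le r/12\}\big|\ge r\Big]\le 2^{-r}.$$ *)

From HB Require Import structures.
From mathcomp Require Import all_boot all_order all_algebra all_fingroup.
From mathcomp Require Import all_classical all_reals all_analysis.
Set Implicit Arguments. Unset Strict Implicit. Unset Printing Implicit Defensive.
Import Order.TTheory GRing.Theory Num.Theory.
Local Open Scope ring_scope.

(* Value of the permutation at (0-based) position k, as a natural number;
   positions k >= n are never used. The paper's values 1..n are shifted to
   0..n-1, which does not affect differences. *)
Definition permval (n : nat) (s : 'S_n) (k : nat) : nat :=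
  match @insub nat (fun k => k < n)%N 'I_n k with
  | Some i => nat_of_ord (s i)
  | None => 0%N
  end.

(* |{ i in {1..floor(n/2)} : |Pi_{2i-1} - Pi_{2i}| <= r/12 }|;
   paper index i corresponds to j = i-1 : 'I_(n./2), positions 2j, 2j+1 (0-based). *)
Definition close_pairs (R : realType) (n : nat) (s : 'S_n) (r : R) : nat :=
  #|[pred j : 'I_(n./2) |
      `|((permval s (2 * j)%N)%:R - (permval s (2 * j).+1)%:R : R)| <= r / 12%:R]|.

Definition close_prob (R : realType) (n : nat) (r : R) : R :=
  (#|[pred s : 'S_n | r <= (close_pairs s r)%:R]|)%:R / (#|{perm 'I_n}|)%:R.

From HB Require Import structures.
From mathcomp Require Import all_boot all_order all_algebra all_fingroup.
From mathcomp Require Import all_classical all_reals all_analysis.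
From mathcomp Require Import Rstruct lra zify.
Import Order.TTheory GRing.Theory Num.Theory.
Set Implicit Arguments. Unset Strict Implicit. Unset Printing Implicit Defensive.

(* Let k = ceil r and d = floor (r/12). For a fixed set of k pairs, reveal the
   pairs one at a time: exchanging the second entry of the i-th pair with any
   of the n - 2i - 1 positions not yet involved is a bijection preserving the
   earlier events, and at most 2d of those positions carry a value within d of
   the first entry, so all k pairs are close with probability at most
   prod_i 2d / (n - 2i - 1). A union bound over the C(n/2, k) sets of pairs
   gives at most (2d)^k / k!, which is at most 2^-k because
   k! >= (k/3)^k >= (4d)^k. *)

Section FactorialLowerBound.
Local Open Scope ring_scope.

Lemma expR1_le3 (R : realType) : expR (1 : R) <= 3.
Proof.
have expR_sixth : expR ((6 : R)^-1) <= 6 / 5.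
  have := expRxMexpNx_1 (6^-1 : R); have := expR_gt0 (6^-1 : R).
  have : (5 / 6 : R) <= expR (- 6^-1) by apply: le_trans (expR_ge1Dx _); lra.
  nra.
have -> : expR (1 : R) = expR 6^-1 ^+ 6 by rewrite -expRM_natl divff.
apply: le_trans (_ : (6 / 5 : R) ^+ 6 <= 3); last by rewrite !exprS expr0; lra.
by apply: lerXn2r; rewrite ?nnegrE ?expR_ge0 //; lra.
Qed.

Lemma expnS_self_le (k : nat) : (k.+1 ^ k <= 3 * k ^ k)%N.
Proof.
case: k => [|k] //; set K := k.+1.
(* Any realType would do; Stdlib's reals serve as a concrete one. *)
rewrite -(ler_nat Rdefinitions.R) natrM !natrX.
have K_gt0 : (0 : Rdefinitions.R) < K%:R by rewrite ltr0n.
have -> : K.+1%:R = K%:R * (1 + K%:R^-1) :> Rdefinitions.R.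
  by rewrite mulrDr mulr1 divff ?gt_eqF // -natr1 addrC.
rewrite exprMn mulrC ler_pM2r ?exprn_gt0 //; apply: le_trans (expR1_le3 _).
have -> : expR (1 : Rdefinitions.R) = expR K%:R^-1 ^+ K.
  by rewrite -expRM_natl divff ?gt_eqF.
by apply: lerXn2r; rewrite ?nnegrE ?expR_ge0 ?expR_ge1Dx // addr_ge0 ?invr_ge0 ?ltW.
Qed.

End FactorialLowerBound.

Lemma expn_self_le_fact (k : nat) : (k ^ k <= 3 ^ k * k`!)%N.
Proof.
elim: k => [|k IHk] //; rewrite expnS factS expnS.
apply: (leq_trans (leq_mul (leqnn _) (expnS_self_le k))).
nia.
Qed.

Lemma expn_le_fact (d k : nat) : (12 * d <= k)%N -> ((4 * d) ^ k <= k`!)%N.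
Proof.
move=> dk; rewrite -(@leq_pmul2l (3 ^ k)) ?expn_gt0 //.
apply: leq_trans (expn_self_le_fact k); rewrite -expnMn.
by case: k dk => [|k] dk //; rewrite leq_exp2r // mulnA.
Qed.

Lemma card_bigcup_le (I T : finType) (P : pred I) (F : I -> {set T}) :
  #|\bigcup_(i | P i) F i| <= \sum_(i | P i) #|F i|.
Proof.
elim/big_rec2: _ => [|i m U _ leUm]; first by rewrite cards0.
by rewrite (leq_trans (leq_card_setU _ _).1) ?leq_add2l.
Qed.

Lemma sum_nat_of_bool (T : finType) (A : {pred T}) (P : pred T) :
  \sum_(x in A) P x = #|[set x in A | P x]|.
Proof.
rewrite -sum1_card big_mkcond [RHS]big_mkcond /=; apply: eq_bigr => x _.
by rewrite !inE; case: (x \in A); case: (P x).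
Qed.

Lemma card_near_le (T : finType) (f : T -> nat) (d : nat) (x0 : T) (U : {set T}) :
  injective f -> x0 \notin U -> #|[set x in U | `|f x0 - f x| <= d]| <= 2 * d.
Proof.
move=> f_inj x0U; set a := f x0.
pose around := [seq a - i.+1 | i <- iota 0 d] ++ [seq a + i.+1 | i <- iota 0 d].
have -> : 2 * d = size around by rewrite size_cat !size_map size_iota addnn mul2n.
rewrite cardE -(size_map f); apply: uniq_leq_size.
  by rewrite map_inj_uniq ?enum_uniq.
move=> v /mapP [x]; rewrite mem_enum inE => /andP [xU near_x] ->.
have fx_neq : f x != a by apply: (contraNneq _ x0U) => /f_inj <-.
rewrite /around mem_cat; apply/orP; case: (ltnP (f x) a) => [fx_lt | fx_ge].
  left; apply/mapP; exists (a - f x).-1; last by lia.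
  by move: near_x; rewrite (distnEl (ltnW fx_lt)) mem_iota; lia.
right; apply/mapP; exists (f x - a).-1; last by move: fx_neq; lia.
by move: near_x fx_neq; rewrite (distnEr fx_ge) mem_iota; lia.
Qed.

Section PairedPositions.
Variable n : nat.
Implicit Types (s : 'S_n) (j : 'I_n./2).

Lemma pair_fst_subproof j : 2 * j < n.
Proof. by have := ltn_ord j; rewrite geq_half_double -mul2n; lia. Qed.

Lemma pair_snd_subproof j : (2 * j).+1 < n.
Proof. by have := ltn_ord j; rewrite geq_half_double -mul2n; lia. Qed.

Definition pair_fst j : 'I_n := Ordinal (pair_fst_subproof j).
Definition pair_snd j : 'I_n := Ordinal (pair_snd_subproof j).

Lemma pair_fst_neq_snd j j' : pair_fst j != pair_snd j'.
Proof. by apply/eqP => /(congr1 val) /= /(congr1 odd); rewrite oddS !oddM. Qed.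

Lemma pair_snd_inj : injective pair_snd.
Proof. by move=> j j' /(congr1 val) [] /eqP; rewrite eqn_pmul2l // => /eqP /val_inj. Qed.

Variable d : nat.

Definition pair_close s j : bool := `|s (pair_fst j) - s (pair_snd j)| <= d.
Definition close_set s : {set 'I_n./2} := [set j | pair_close s j].
Definition close_on (js : seq 'I_n./2) : {set 'S_n} := [set s | all (pair_close s) js].

Section AddOnePair.
Variables (j : 'I_n./2) (js : seq 'I_n./2).

Let occupied : seq 'I_n :=
  pair_fst j :: [seq pair_fst i | i <- js] ++ [seq pair_snd i | i <- js].
Let free : {set 'I_n} := [set q | q \notin occupied].

Lemma card_free : n - (2 * size js).+1 <= #|free|.
Proof.
have : #|occupied| + #|free| = n.
  rewrite -[RHS]card_ord -(cardC (mem occupied)); congr addn.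
  by apply: eq_card => q; rewrite !inE.
have := card_size occupied; rewrite [size _]/= size_cat !size_map.
by move: #|occupied| => c; lia.
Qed.

Lemma tperm_free_fixes q (x : 'I_n) :
  q \in free -> x \in occupied -> x != pair_snd j -> tperm (pair_snd j) q x = x.
Proof.
move=> qfree xocc xp; apply: tpermD; first by rewrite eq_sym.
by apply: contraTneq qfree => ->; rewrite inE negbK.
Qed.

Hypothesis j_notin : j \notin js.

Lemma close_on_tperm s q :
  q \in free -> ((tperm (pair_snd j) q * s)%g \in close_on js) = (s \in close_on js).
Proof.
move=> qfree; rewrite !inE; apply: eq_in_all => i ijs.
have fst_occ : pair_fst i \in occupied by rewrite in_cons mem_cat map_f ?orbT.
have snd_occ : pair_snd i \in occupied by rewrite in_cons mem_cat map_f ?orbT.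
have snd_neq : pair_snd i != pair_snd j.
  by apply: contraNneq j_notin => /pair_snd_inj <-.
by rewrite /pair_close !permM !tperm_free_fixes ?pair_fst_neq_snd.
Qed.

Lemma pair_close_tperm s q : q \in free ->
  pair_close (tperm (pair_snd j) q * s)%g j = (`|s (pair_fst j) - s q| <= d).
Proof.
move=> qfree; rewrite /pair_close !permM tpermL tperm_free_fixes ?pair_fst_neq_snd //.
exact: mem_head.
Qed.

Lemma card_close_on_cons :
  #|close_on (j :: js)| * (n - (2 * size js).+1) <= 2 * d * #|close_on js|.
Proof.
set A := close_on js.
(* [swap q s] is [s] with the values at positions [pair_snd j] and [q] exchanged. *)
pose swap q s := (tperm (pair_snd j) q * s)%g.
have per_position q : q \in free ->
    \sum_(s in A) pair_close (swap q s) j = #|close_on (j :: js)|.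
  move=> qfree; rewrite sum_nat_of_bool -[RHS](card_preimset _ (mulgI (tperm (pair_snd j) q))).
  apply: eq_card => s; have := close_on_tperm s qfree.
  by rewrite !inE /= => ->; rewrite andbC.
have per_perm s : \sum_(q in free) pair_close (swap q s) j <= 2 * d.
  under eq_bigr => q qfree do rewrite pair_close_tperm //.
  rewrite sum_nat_of_bool; apply: card_near_le; first by move=> x y /val_inj /perm_inj.
  by rewrite inE negbK mem_head.
apply: (leq_trans (leq_mul (leqnn _) card_free)).
rewrite mulnC -sum_nat_const -(eq_bigr _ per_position) exchange_big /=.
by rewrite mulnC -sum_nat_const; apply: leq_sum => s _; apply: per_perm.
Qed.

End AddOnePair.

Lemma card_close_on (js : seq 'I_n./2) : uniq js ->
  #|close_on js| * \prod_(i < size js) (n - (2 * i).+1) <= (2 * d) ^ size js * n`!.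
Proof.
elim: js => [_ | j js IHjs /= /andP [j_notin js_uniq]].
  have -> : close_on [::] = [set: 'S_n]%SET by apply/setP => s; rewrite !inE.
  by rewrite cardsT card_Sn big_ord0 muln1 expn0 mul1n.
rewrite big_ord_recr /= expnS mulnCA.
apply: (leq_trans (leq_mul (leqnn _) (card_close_on_cons j_notin))).
apply: (@leq_trans (2 * d * ((2 * d) ^ size js * n`!))); last by rewrite mulnA.
by rewrite mulnCA leq_mul2l [X in X <= _]mulnC IHjs ?orbT.
Qed.

Lemma card_many_close_mul_prod k :
  #|[set s | k <= #|close_set s|]| * \prod_(i < k) (n - (2 * i).+1) <=
    'C(n./2, k) * ((2 * d) ^ k * n`!).
Proof.
set E := [set s | _].
have E_sub : E \subset \bigcup_(S : {set 'I_n./2} | #|S| == k) close_on (enum S).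
  apply/fintype.subsetP => s; rewrite inE => k_le.
  have /card_gt0P [S] : 0 < #|[set S : {set 'I_n./2} | S \subset close_set s & #|S| == k]|.
    by rewrite cards_draws bin_gt0.
  rewrite inE => /andP [S_sub S_card]; apply/bigcupP; exists S => //.
  rewrite inE; apply/allP => i; rewrite mem_enum => iS.
  by have := fintype.subsetP S_sub i iS; rewrite inE.
apply: (leq_trans (leq_mul (subset_leq_card E_sub) (leqnn _))).
apply: (leq_trans (leq_mul (card_bigcup_le _ _) (leqnn _))).
have -> : 'C(n./2, k) = #|[set S : {set 'I_n./2} | #|S| == k]|.
  by rewrite card_draws card_ord.
rewrite -sum_nat_cond_const big_distrl; apply: leq_sum => S /eqP S_card.
by have := card_close_on (enum_uniq (mem S)); rewrite -cardE S_card.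
Qed.

Lemma card_many_close_mul_fact k : k <= n./2 ->
  #|[set s | k <= #|close_set s|]| * k`! <= (2 * d) ^ k * n`!.
Proof.
move=> k_le; have half_le : 2 * n./2 <= n by rewrite mul2n -geq_half_double.
have ffact_le : n./2 ^_ k <= \prod_(i < k) (n - (2 * i).+1).
  by rewrite ffact_prod; apply: leq_prod => i _; lia.
have prod_gt0 : 0 < \prod_(i < k) (n - (2 * i).+1).
  by apply: leq_trans ffact_le; rewrite ffact_gt0.
rewrite -(leq_pmul2r prod_gt0) mulnAC.
apply: (leq_trans (leq_mul (card_many_close_mul_prod k) (leqnn _))).
by rewrite mulnAC mulnC leq_mul2l bin_ffact ffact_le orbT.
Qed.

Lemma card_many_close k : 12 * d <= k ->
  #|[set s | k <= #|close_set s|]| * 2 ^ k <= n`!.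
Proof.
move=> dk; set E := [set s | _].
have [half_lt_k | k_le] := ltnP n./2 k.
  suff -> : #|E| = 0 by [].
  apply: eq_card0 => s; rewrite !inE; apply/negbTE; rewrite -ltnNge.
  by rewrite (leq_ltn_trans (max_card _)) // card_ord.
have E_fact := card_many_close_mul_fact k_le.
have [pow0 | pow_gt0] := posnP ((2 * d) ^ k).
  move: E_fact; rewrite -/E pow0 mul0n leqn0 muln_eq0 (gtn_eqF (fact_gt0 k)) orbF.
  by move=> /eqP ->.
rewrite -(leq_pmul2l pow_gt0); apply: leq_trans E_fact.
rewrite -/E mulnCA leq_mul2l -expnMn mulnAC.
by rewrite expn_le_fact ?orbT.
Qed.

End PairedPositions.

Local Open Scope ring_scope.

Lemma ler_distn_truncn (R : realType) (t : R) (a b : nat) : 0 <= t ->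
  (`|a%:R - b%:R| <= t) = (`|a - b|%N <= Num.truncn t)%N.
Proof. by move=> t_ge0; rewrite truncn_ge_nat // natr_absz intr_norm rmorphB. Qed.

Lemma close_pairsE (R : realType) (n : nat) (s : 'S_n) (r : R) : 0 <= r ->
  close_pairs s r = #|close_set (Num.truncn (r / 12%:R)) s|.
Proof.
move=> r_ge0; rewrite /close_pairs cardsE; apply: eq_card => j; rewrite !inE.
have permvalE (i : 'I_n) : permval s i = s i.
  by rewrite /permval insubT // => i_lt; congr (nat_of_ord (s _)); apply: val_inj.
rewrite (permvalE (pair_fst j)) (permvalE (pair_snd j)).
by rewrite ler_distn_truncn ?divr_ge0.
Qed.

Theorem claim3p12 (R : realType) (n : nat) (r : R) (hr : 1 <= r) :
  close_prob n r <= powR 2 (- r).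
Proof.
have r_ge0 : 0 <= r by apply: le_trans hr.
set d := Num.truncn (r / 12%:R).
set k := `|Num.ceil r|%N.
have ceil_k : Num.ceil r = k%:Z by rewrite gez0_abs // ceil_ge0; lra.
have r_le_k : r <= k%:R by have := ceil_ge r; rewrite ceil_k.
have dk : (12 * d <= k)%N.
  rewrite -(ler_nat R) natrM mulrC -ler_pdivlMr //.
  have : d%:R <= r / 12%:R by rewrite truncn_le divr_ge0.
  lra.
have events_sub : (#|[pred s : 'S_n | (r <= (close_pairs s r)%:R)%R]| <=
    #|[set s : 'S_n | k <= #|close_set d s|]|)%N.
  apply: subset_leq_card; apply/fintype.subsetP => s; rewrite !inE close_pairsE //.
  by rewrite -/d -lez_nat -ceil_k ceil_le_int.
apply: (@le_trans _ _ (2 ^- k)).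
  rewrite /close_prob card_Sn ler_pdivrMr ?ltr0n ?fact_gt0 // mulrC.
  rewrite ler_pdivlMr ?exprn_gt0 // -natrX -natrM ler_nat.
  by apply: leq_trans (card_many_close n dk); rewrite leq_mul2r events_sub orbT.
by rewrite -powR_invn // ler_powR ?lerN2 //; lra.
Qed.
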